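(* The 3-graph $J_4$ with vertex set $[5]$ and edges $123,124,125,134,135,145$ is forbidden for every triangle $T$.
   Context: A 3-graph is a 3-uniform hypergraph; $G$ is $F$-free if it has no (not necessarily induced) subhypergraph isomorphic to $F$. For a triangle $T$ with side lengths $a,b,c$ and $\varepsilon>0$, with $\varepsilon'=\varepsilon\min\{a,b,c\}$, a triangle $A'B'C'$ is $\varepsilon$-congruent to $T$ if there are $A,B,C\in\mathbb{R}^2$ with $ABC$ congruent to $T$ and $A',B',C'$ within distance $\varepsilon'$ of $A,B,C$ respectively. For finite $P\subseteq\mathbb{R}^2$, $\mathcal{H}(T,P,\varepsilon)$ is the 3-graph on $P$ whose edges are triples forming triangles $\varepsilon$-congruent to $T$. A 3-graph $H$ is forbidden for $T$ if there exists $\varepsilon>0$ such that for every $P\subseteq\mathbb{R}^2$ with $|P|=|V(H)|$, $\mathcal{H}(T,P,\varepsilon)$ is $H$-free. *)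

From Stdlib Require Import Reals Lra List.
Import ListNotations.
Open Scope R_scope.

Definition pt : Type := (R * R)%type.

Definition dist2 (p q : pt) : R :=
  sqrt ((fst p - fst q) ^ 2 + (snd p - snd q) ^ 2).

Definition is_triangle (a b c : R) : Prop :=
  0 < a /\ 0 < b /\ 0 < c /\ a < b + c /\ b < a + c /\ c < a + b.

Definition congruent_to (a b c : R) (A B C : pt) : Prop :=
  dist2 B C = a /\ dist2 C A = b /\ dist2 A B = c.

Definition eps_congruent (a b c eps : R) (A' B' C' : pt) : Prop :=
  exists A B C : pt, congruent_to a b c A B C /\
    dist2 A' A <= eps * Rmin a (Rmin b c) /\
    dist2 B' B <= eps * Rmin a (Rmin b c) /\
    dist2 C' C <= eps * Rmin a (Rmin b c).

Definition HTPe_edge (a b c eps : R) (P : list pt) (x y z : pt) : Prop :=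
  In x P /\ In y P /\ In z P /\ x <> y /\ y <> z /\ x <> z /\
  (eps_congruent a b c eps x y z \/ eps_congruent a b c eps x z y \/
   eps_congruent a b c eps y x z \/ eps_congruent a b c eps y z x \/
   eps_congruent a b c eps z x y \/ eps_congruent a b c eps z y x).

Record hyp3 := { hv : nat; hedges : list (nat * nat * nat) }.

(* G (a 3-graph on the points P, given by its edge relation) contains a
   (not necessarily induced) copy of H: an injective map from V(H) into P
   sending every edge of H to an edge of G. *)
Definition contains_copy (H : hyp3) (P : list pt) (G : pt -> pt -> pt -> Prop) : Prop :=
  exists f : nat -> pt,
    (forall i, (i < hv H)%nat -> In (f i) P) /\
    (forall i j, (i < hv H)%nat -> (j < hv H)%nat -> f i = f j -> i = j) /\
    (forall i j k, In (i, j, k) (hedges H) -> G (f i) (f j) (f k)).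

Definition forbidden (H : hyp3) (a b c : R) : Prop :=
  exists eps : R, 0 < eps /\
    forall P : list pt, NoDup P -> length P = hv H ->
      ~ contains_copy H P (HTPe_edge a b c eps P).

(* J_4 on [5] = {1,...,5}, encoded on {0,...,4} (vertex i+1 ↦ i):
   edges 123,124,125,134,135,145. *)
Definition J4 : hyp3 :=
  {| hv := 5;
     hedges := [(0,1,2); (0,1,3); (0,1,4); (0,2,3); (0,2,4); (0,3,4)]%nat |}.

(* Let [S(p,x,y)] be twice the signed area of the triangle pxy.  For any five
   points, the Grassmann-Plücker relation
   [S(p,1,2) S(p,3,4) - S(p,1,3) S(p,2,4) + S(p,1,4) S(p,2,3) = 0]
   holds.  In a copy of J_4 the vertex p = 1 forms an edge with every pair of
   the other four vertices, so all six areas are within a small relative error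
   of the area of T; then the three products have nearly equal absolute
   values, and a signed sum of three such numbers cannot vanish. *)

From Stdlib Require Import Reals.
From Stdlib Require Import Lra List.
Import ListNotations.
Open Scope R_scope.

Definition vsub (p q : pt) : pt := (fst p - fst q, snd p - snd q).

Definition norm (u : pt) : R := sqrt (fst u ^ 2 + snd u ^ 2).

Definition cross (u v : pt) : R := fst u * snd v - snd u * fst v.

Definition sarea (A B C : pt) : R := cross (vsub B A) (vsub C A).

(* The square of twice the area of a triangle with sides a, b, c, written as
   [(b c sin α)^2] with the law of cosines. *)
Definition area2_sq (a b c : R) : R := c ^ 2 * b ^ 2 - ((c ^ 2 + b ^ 2 - a ^ 2) / 2) ^ 2.

Lemma Rabs_le_inv (x b : R) : Rabs x <= b -> - b <= x <= b.
Proof. unfold Rabs; destruct (Rcase_abs x); intros; lra. Qed.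

Lemma dist2_sym (p q : pt) : dist2 p q = dist2 q p.
Proof. unfold dist2; f_equal; ring. Qed.

Lemma Rabs_cross_le (u v : pt) : Rabs (cross u v) <= norm u * norm v.
Proof.
  unfold cross, norm.
  destruct u as [u1 u2], v as [v1 v2]; cbn [fst snd].
  rewrite <- sqrt_mult by (apply Rplus_le_le_0_compat; apply pow2_ge_0).
  rewrite <- sqrt_Rsqr_abs.
  apply sqrt_le_1_alt.
  (* Lagrange's identity *)
  replace ((u1 ^ 2 + u2 ^ 2) * (v1 ^ 2 + v2 ^ 2))
    with (Rsqr (u1 * v2 - u2 * v1) + (u1 * v1 + u2 * v2) ^ 2)
    by (unfold Rsqr; ring).
  pose proof (pow2_ge_0 (u1 * v1 + u2 * v2)); lra.
Qed.

Lemma sarea_rot (A B C : pt) : sarea B C A = sarea A B C.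
Proof. unfold sarea, cross, vsub; simpl; ring. Qed.

Lemma sarea_swap (A B C : pt) : sarea A C B = - sarea A B C.
Proof. unfold sarea, cross, vsub; simpl; ring. Qed.

Lemma sarea_pluecker (p x1 x2 x3 x4 : pt) :
  sarea p x1 x2 * sarea p x3 x4 - sarea p x1 x3 * sarea p x2 x4
    + sarea p x1 x4 * sarea p x2 x3 = 0.
Proof. unfold sarea, cross, vsub; simpl; ring. Qed.

Lemma Rabs_sarea_congruent (a b c : R) (A B C : pt) :
  congruent_to a b c A B C -> Rabs (sarea A B C) = sqrt (area2_sq a b c).
Proof.
  intros (Ha & Hb & Hc).
  rewrite <- sqrt_Rsqr_abs; f_equal.
  unfold Rsqr, area2_sq; rewrite <- Ha, <- Hb, <- Hc.
  unfold dist2, sarea, cross, vsub; cbn [fst snd].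
  rewrite !pow2_sqrt by (apply Rplus_le_le_0_compat; apply pow2_ge_0).
  field.
Qed.

Lemma area2_sq_pos (a b c : R) : is_triangle a b c -> 0 < area2_sq a b c.
Proof.
  intros (Ha & Hb & Hc & H1 & H2 & H3).
  (* Heron's formula *)
  replace (area2_sq a b c)
    with ((a - b + c) * (a + b - c) * ((b + c - a) * (b + c + a)) / 4)
    by (unfold area2_sq; field).
  assert (0 < (a - b + c) * (a + b - c)) by (apply Rmult_lt_0_compat; lra).
  assert (0 < (b + c - a) * (b + c + a)) by (apply Rmult_lt_0_compat; lra).
  assert (0 < (a - b + c) * (a + b - c) * ((b + c - a) * (b + c + a)))
    by (apply Rmult_lt_0_compat; lra).
  lra.
Qed.

Lemma sarea_perturb (A B C A' B' C' : pt) (d M : R) :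
  dist2 A' A <= d -> dist2 B' B <= d -> dist2 C' C <= d ->
  dist2 B A <= M -> dist2 C A <= M ->
  Rabs (sarea A' B' C' - sarea A B C) <= 4 * M * d + 3 * (d * d).
Proof.
  intros Hu Hv Hw Hp Hq.
  set (u := vsub A' A); set (v := vsub B' B); set (w := vsub C' C).
  set (p := vsub B A); set (q := vsub C A).
  change (norm u <= d) in Hu; change (norm v <= d) in Hv; change (norm w <= d) in Hw.
  change (norm p <= M) in Hp; change (norm q <= M) in Hq.
  (* bilinearity of [cross], with [vsub B' A' = p + v - u], [vsub C' A' = q + w - u] *)
  replace (sarea A' B' C' - sarea A B C) with
    (cross p w - cross p u + cross v q - cross u q
     + cross v w - cross v u - cross u w)
    by (unfold u, v, w, p, q, sarea, cross, vsub; simpl; ring).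
  assert (Hbound : forall x y X Y, norm x <= X -> norm y <= Y ->
            - (X * Y) <= cross x y <= X * Y).
  { intros x y X Y Hx Hy; apply Rabs_le_inv.
    eapply Rle_trans; [apply Rabs_cross_le|].
    apply Rmult_le_compat; auto; apply sqrt_pos. }
  pose proof (Hbound _ _ _ _ Hp Hw); pose proof (Hbound _ _ _ _ Hp Hu).
  pose proof (Hbound _ _ _ _ Hv Hq); pose proof (Hbound _ _ _ _ Hu Hq).
  pose proof (Hbound _ _ _ _ Hv Hw); pose proof (Hbound _ _ _ _ Hv Hu).
  pose proof (Hbound _ _ _ _ Hu Hw).
  clear Hbound; clearbody u v w p q.
  apply Rabs_le; lra.
Qed.

Lemma Rabs_sarea_eps_congruent (a b c eps : R) (X Y Z : pt) :
  is_triangle a b c -> eps_congruent a b c eps X Y Z ->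
  let d := eps * Rmin a (Rmin b c) in
  Rabs (Rabs (sarea X Y Z) - sqrt (area2_sq a b c))
    <= 4 * (a + b + c) * d + 3 * (d * d).
Proof.
  intros (Pa & Pb & Pc & _) (A & B & C & Hcong & HA & HB & HC) d.
  rewrite <- (Rabs_sarea_congruent _ _ _ _ _ _ Hcong).
  destruct Hcong as (Ha & Hb & Hc).
  eapply Rle_trans; [apply Rabs_triang_inv2|].
  apply sarea_perturb; auto; rewrite ?(dist2_sym B A); lra.
Qed.

Lemma Rabs_sarea_HTPe_edge (a b c eps : R) (P : list pt) (X Y Z : pt) :
  is_triangle a b c -> HTPe_edge a b c eps P X Y Z ->
  let d := eps * Rmin a (Rmin b c) in
  Rabs (Rabs (sarea X Y Z) - sqrt (area2_sq a b c))
    <= 4 * (a + b + c) * d + 3 * (d * d).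
Proof.
  intros Ht (_ & _ & _ & _ & _ & _ & Hcong).
  destruct Hcong as [H|[H|[H|[H|[H|H]]]]];
    pose proof (Rabs_sarea_eps_congruent _ _ _ _ _ _ _ Ht H) as Hb.
  - exact Hb.
  - rewrite sarea_swap, Rabs_Ropp in Hb; exact Hb.
  - rewrite <- sarea_rot, sarea_swap, Rabs_Ropp in Hb; exact Hb.
  - rewrite sarea_rot in Hb; exact Hb.
  - rewrite <- sarea_rot in Hb; exact Hb.
  - rewrite sarea_swap, Rabs_Ropp, <- sarea_rot in Hb; exact Hb.
Qed.

Lemma Rabs_mult_between (s t l1 u1 l2 u2 : R) : 0 <= l1 -> 0 <= l2 ->
  l1 <= Rabs s <= u1 -> l2 <= Rabs t <= u2 -> l1 * l2 <= Rabs (s * t) <= u1 * u2.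
Proof.
  intros H1 H2 Hs Ht; rewrite Rabs_mult.
  split; apply Rmult_le_compat; lra.
Qed.

Lemma three_term_nonzero (x y z l u : R) : 0 < l -> u < 2 * l ->
  l <= Rabs x <= u -> l <= Rabs y <= u -> l <= Rabs z <= u ->
  x - y + z <> 0.
Proof.
  intros Hl Hu Hx Hy Hz E.
  (* [y = x + z]: if [x] and [z] have the same sign [|y| >= 2 l], else [|y| <= u - l < l] *)
  revert Hx Hy Hz E; unfold Rabs.
  destruct (Rcase_abs x), (Rcase_abs y), (Rcase_abs z); intros; lra.
Qed.

Lemma no_equiareal_fan (K : R) (p x1 x2 x3 x4 : pt) : 0 < K ->
  (forall y z, In (y, z) [(x1, x2); (x1, x3); (x1, x4); (x2, x3); (x2, x4); (x3, x4)] ->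
     Rabs (Rabs (sarea p y z) - K) <= K / 10) ->
  False.
Proof.
  intros HK Hfan.
  set (fan := [(x1, x2); (x1, x3); (x1, x4); (x2, x3); (x2, x4); (x3, x4)]) in Hfan.
  assert (Hnear : forall y z, In (y, z) fan ->
            9 / 10 * K <= Rabs (sarea p y z) <= 11 / 10 * K).
  { intros y z Hyz; pose proof (Rabs_le_inv _ _ (Hfan y z Hyz)); lra. }
  assert (Hprod : forall y z y' z', In (y, z) fan -> In (y', z') fan ->
            81 / 100 * (K * K) <= Rabs (sarea p y z * sarea p y' z')
              <= 121 / 100 * (K * K)).
  { intros y z y' z' Hyz Hyz'.
    replace (81 / 100 * (K * K)) with (9 / 10 * K * (9 / 10 * K)) by field.
    replace (121 / 100 * (K * K)) with (11 / 10 * K * (11 / 10 * K)) by field.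
    apply Rabs_mult_between; auto; lra. }
  assert (HKK : 0 < K * K) by (apply Rmult_lt_0_compat; exact HK).
  apply (three_term_nonzero _ _ _ (81 / 100 * (K * K)) (121 / 100 * (K * K)))
    with (6 := sarea_pluecker p x1 x2 x3 x4); try lra;
    apply Hprod; simpl; tauto.
Qed.

Lemma small_quadratic_error (M e : R) : 0 <= M -> 0 < e ->
  exists d, 0 < d /\ 4 * M * d + 3 * (d * d) <= e.
Proof.
  intros HM He.
  set (d := Rmin 1 (e / (4 * M + 3))).
  assert (Hd : 0 < d) by (apply Rmin_pos; [lra | apply Rdiv_lt_0_compat; lra]).
  pose proof (Rmin_l 1 (e / (4 * M + 3))) as Hd1.
  assert (Hde : d * (4 * M + 3) <= e).
  { apply (Rmult_le_reg_r (/ (4 * M + 3))); [apply Rinv_0_lt_compat; lra|].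
    pose proof (Rmin_r 1 (e / (4 * M + 3))) as Hd2; fold d in Hd2.
    field_simplify; lra. }
  exists d; split; [exact Hd|].
  fold d in Hd1; nra.
Qed.

Theorem lemma2p7 : forall a b c : R, is_triangle a b c -> forbidden J4 a b c.
Proof.
  intros a b c Ht.
  pose proof Ht as (Pa & Pb & Pc & _).
  set (K := sqrt (area2_sq a b c)).
  assert (HK : 0 < K) by (apply sqrt_lt_R0, area2_sq_pos, Ht).
  set (m := Rmin a (Rmin b c)).
  assert (Hm : 0 < m) by (apply Rmin_pos; [|apply Rmin_pos]; lra).
  destruct (small_quadratic_error (a + b + c) (K / 10)) as (d & Hd & Herr); [lra|lra|].
  exists (d / m); split; [apply Rdiv_lt_0_compat; lra|].
  intros P _ _ (f & _ & _ & Hedge).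
  apply (no_equiareal_fan K (f 0%nat) (f 1%nat) (f 2%nat) (f 3%nat) (f 4%nat) HK).
  intros y z Hyz.
  assert (Hyz_edge : HTPe_edge a b c (d / m) P (f 0%nat) y z).
  { simpl in Hyz; repeat destruct Hyz as [[= <- <-]|Hyz]; try contradiction;
      apply Hedge; simpl; tauto. }
  pose proof (Rabs_sarea_HTPe_edge _ _ _ _ _ _ _ _ Ht Hyz_edge) as Hb; cbv zeta in Hb.
  replace (d / m * Rmin a (Rmin b c)) with d in Hb by (fold m; field; lra).
  fold K in Hb; lra.
Qed.
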